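(* Let $G$ be a graph without isolated vertices, let $F\subseteq\varphi(G)$, and let $Z$ be a nondeterministic read-once branching program representing $F$. Let $u$ be a node of $Z$ and let $M=\{\{x_1,y_1\},\dots,\{x_q,y_q\}\}$ be a matching of $G$ such that $\{x_1,\dots,x_q\}$ and $\{y_1,\dots,y_q\}$ are separated by $u$. Then there is a set $X$ of $q$ vertices of $G$ containing exactly one vertex of each $\{x_i,y_i\}$ such that for every source-sink path $P$ of $Z$ passing through $u$, $X\subseteq A(P)$ (i.e. every variable of $X$ occurs positively in $A(P)$).
   Context: $\varphi(G)$ is the CNF on variables $V(G)$ with clauses $(u\vee v)$ for $\{u,v\}\in E(G)$; Boolean functions are identified with their sets of satisfying assignments (sets of literals), and $F\subseteq\varphi(G)$ means every satisfying assignment of $F$ satisfies $\varphi(G)$. A nondeterministic read-once branching program (NROBP) over variable set $X$ is a directed acyclic graph with one source and one sink, some edges labelled by literals over $X$, such that each variable occurs on exactly one edge of every source-sink path; $A(P)$ is the set of literals labelling path $P$, and the NROBP represents the function whose satisfying assignments are the sets $A(P)$ over source-sink paths $P$. A variable $x$ is located before node $v$ if on every source-sink path through $v$, $x$ occurs on the prefix ending at $v$; it is located after $v$ if it occurs on the suffix starting at $v$ on every such path. Two sets $X,Y$ of variables are separated by $v$ if either all of $X$ are located before $v$ and all of $Y$ after $v$, or vice versa. *)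

From mathcomp Require Import all_boot.
Set Implicit Arguments. Unset Strict Implicit. Unset Printing Implicit Defensive.

Definition simple_graph (V : finType) (G : rel V) : Prop :=
  (forall x y, G x y = G y x) /\ (forall x, ~~ G x x).

Definition no_isolated (V : finType) (G : rel V) : Prop :=
  forall v, exists w, G v w.

(* Literals over V: (x, true) = x, (x, false) = ~x.
   Assignments: total functions V -> bool; the set of literals of f. *)
Definition lits (V : finType) (f : {ffun V -> bool}) : {set V * bool} :=
  [set (x, f x) | x : V].

Definition sat_phi (V : finType) (G : rel V) (f : {ffun V -> bool}) : bool :=
  [forall x, forall y, G x y ==> (f x || f y)].

Definition sub_phi (V : finType) (G : rel V) (F : {set {ffun V -> bool}}) : Prop :=
  forall f, f \in F -> sat_phi G f.

(* A branching-program skeleton: nodes N, edges E (multi-edges allowed),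
   each edge with a source, a target and an optional literal label. *)
Record bp (V : finType) := BP {
  bp_node : finType;
  bp_edge : finType;
  bp_src : bp_edge -> bp_node;
  bp_dst : bp_edge -> bp_node;
  bp_lab : bp_edge -> option (V * bool);
  bp_source : bp_node;
  bp_sink : bp_node }.

Section BP.
Variables (V : finType) (Z : bp V).

Fixpoint walk (a : bp_node Z) (p : seq (bp_edge Z)) (b : bp_node Z) : bool :=
  match p with
  | [::] => a == b
  | e :: p' => (bp_src e == a) && walk (bp_dst e) p' b
  end.

Definition st_path (p : seq (bp_edge Z)) : bool := walk (bp_source Z) p (bp_sink Z).

Definition A (p : seq (bp_edge Z)) : {set V * bool} :=
  [set l | has (fun e => bp_lab e == Some l) p].

Definition occurs (x : V) (p : seq (bp_edge Z)) : nat :=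
  count (fun e => if bp_lab e is Some l then l.1 == x else false) p.

Definition is_NROBP : Prop :=
  (forall n p, walk n p n -> p = [::]) /\
  (forall n, (~~ [exists e, bp_dst e == n]) = (n == bp_source Z)) /\
  (forall n, (~~ [exists e, bp_src e == n]) = (n == bp_sink Z)) /\
  (forall p, st_path p -> forall x, occurs x p = 1%N).

Definition represents (F : {set {ffun V -> bool}}) : Prop :=
  forall f, f \in F <-> exists p, st_path p /\ A p = lits f.

Definition split_at (v : bp_node Z) (p1 p2 : seq (bp_edge Z)) : bool :=
  walk (bp_source Z) p1 v && walk v p2 (bp_sink Z).

Definition located_before (x : V) (v : bp_node Z) : Prop :=
  forall p1 p2, split_at v p1 p2 -> (occurs x p1 > 0)%N.

Definition located_after (x : V) (v : bp_node Z) : Prop :=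
  forall p1 p2, split_at v p1 p2 -> (occurs x p2 > 0)%N.

Definition separated (X Y : {set V}) (v : bp_node Z) : Prop :=
  ((forall x, x \in X -> located_before x v) /\ (forall y, y \in Y -> located_after y v))
  \/
  ((forall x, x \in X -> located_after x v) /\ (forall y, y \in Y -> located_before y v)).

End BP.

Definition is_matching (V : finType) (G : rel V) (q : nat) (x y : 'I_q -> V) : Prop :=
  (forall i, G (x i) (y i)) /\ injective x /\ injective y /\
  (forall i j, x i != y j).

From mathcomp Require Import all_boot.
From Stdlib Require Import Classical.

(* Let {x, y} be a matching edge with x read before u and y read after u.  If
   neither is positive on every source-sink path through u, take such a path on
   which x is negative (necessarily on its prefix, where x is read) and one on
   which y is negative (on its suffix).  Splicing the first prefix with the
   second suffix gives a source-sink path, hence an assignment of F, with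
   x = y = false: it violates the clause x \/ y of phi(G).  So every matching
   edge has an endpoint positive on all paths through u; as the 2q endpoints
   are distinct, choosing one per edge gives q vertices. *)

Set Implicit Arguments. Unset Strict Implicit. Unset Printing Implicit Defensive.

Lemma mem_lits (V : finType) (f : {ffun V -> bool}) v b :
  ((v, b) \in lits f) = (b == f v).
Proof. by apply/imsetP/eqP => [[w _ [-> ->]] // | ->]; exists v. Qed.

Lemma sat_phi_edge (V : finType) (G : rel V) (f : {ffun V -> bool}) a b :
  sat_phi G f -> G a b -> f a || f b.
Proof. by move=> /forallP /(_ a) /forallP /(_ b) /implyP. Qed.

Section BranchingProgram.
Variables (V : finType) (Z : bp V).
Implicit Types (p : seq (bp_edge Z)) (v : V) (u : bp_node Z).

Lemma walk_cat n1 n2 n3 p1 p2 : walk n1 p1 n2 -> walk n2 p2 n3 -> walk n1 (p1 ++ p2) n3.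
Proof.
elim: p1 n1 => [|e p1 IH] n1 /=; first by move/eqP->.
by case/andP=> -> /IH H /H ->.
Qed.

Lemma split_at_st_path u p1 p2 p1' p2' :
  split_at u p1 p2 -> split_at u p1' p2' -> st_path (p1 ++ p2').
Proof. by case/andP=> w1 _ /andP[_ w2]; apply: walk_cat w1 w2. Qed.

Lemma mem_A_cat l p1 p2 : (l \in A (p1 ++ p2)) = (l \in A p1) || (l \in A p2).
Proof. by rewrite !inE has_cat. Qed.

Lemma occursE v p : occurs v p =
  (count (fun e => bp_lab e == Some (v, true)) p
   + count (fun e => bp_lab e == Some (v, false)) p)%N.
Proof.
elim: p => //= e p ->; case: (bp_lab e) => [[w b]|] //=.
by rewrite !(inj_eq Some_inj) !xpair_eqE; case: (w == v); case: b => /=; rewrite ?addnS ?addSn.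
Qed.

Lemma occurs_gt0_mem_A v p :
  (0 < occurs v p)%N -> ((v, true) \in A p) || ((v, false) \in A p).
Proof. by rewrite occursE addn_gt0 !inE !has_count. Qed.

Lemma occurs_gt1_mem_A v p :
  (v, true) \in A p -> (v, false) \in A p -> (1 < occurs v p)%N.
Proof. by rewrite occursE !inE !has_count; apply: leq_add. Qed.

Lemma read_once_A_lits p :
  (forall v, occurs v p = 1%N) -> A p = lits [ffun v => (v, true) \in A p].
Proof.
move=> once; apply/setP => -[v b]; rewrite mem_lits ffunE.
have /occurs_gt0_mem_A : (0 < occurs v p)%N by rewrite once.
case: b; first by case: ((v, true) \in A p).
case pos: ((v, true) \in A p) => //= neg.
by apply/negP => /(occurs_gt1_mem_A pos); rewrite once.
Qed.

Definition forced_true u v : Prop :=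
  forall p1 p2, split_at u p1 p2 -> (v, true) \in A (p1 ++ p2).

Section Clause.
Variables (F : {set {ffun V -> bool}}) (a b : V) (u : bp_node Z).
Hypotheses (HZ : is_NROBP Z) (HZF : represents Z F).
Hypotheses (Fab : forall f, f \in F -> f a || f b).
Hypotheses (Ha : located_before a u) (Hb : located_after b u).

Lemma clause_split_paths p1 p2 p1' p2' : split_at u p1 p2 -> split_at u p1' p2' ->
  ((a, true) \in A (p1 ++ p2)) || ((b, true) \in A (p1' ++ p2')).
Proof.
move=> S S'; apply/norP => -[Na Nb].
have Fa : (a, false) \in A p1.
  by case/orP: (occurs_gt0_mem_A (Ha S)) => // Ta; rewrite mem_A_cat Ta in Na.
have Fb : (b, false) \in A p2'.
  by case/orP: (occurs_gt0_mem_A (Hb S')) => // Tb; rewrite mem_A_cat Tb orbT in Nb.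
have path := split_at_st_path S S'.
set f := [ffun v => (v, true) \in A (p1 ++ p2')].
have lits_f : A (p1 ++ p2') = lits f := read_once_A_lits (HZ.2.2.2 _ path).
have /Fab : f \in F by apply/HZF; exists (p1 ++ p2').
have : (a, false) \in lits f by rewrite -lits_f mem_A_cat Fa.
have : (b, false) \in lits f by rewrite -lits_f mem_A_cat Fb orbT.
by rewrite !mem_lits => /eqP <- /eqP <-.
Qed.

Lemma clause_forced_true : forced_true u a \/ forced_true u b.
Proof.
apply: NNPP => /not_or_and[Na Nb]; apply: Na => p1 p2 S.
apply/negPn/negP => Ta; apply: Nb => p1' p2' S'.
by have := clause_split_paths S S'; rewrite (negbTE Ta).
Qed.

End Clause.
End BranchingProgram.

Section Transversal.
Variables (V : finType) (q : nat) (x y : 'I_q -> V) (c : 'I_q -> bool).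
Hypotheses (injx : injective x) (injy : injective y) (xNy : forall i j, x i != y j).

Definition transversal : {set V} := [set (if c i then x i else y i) | i : 'I_q].

Lemma mem_x_transversal i : (x i \in transversal) = c i.
Proof.
apply/imsetP/idP => [[j _] | ci]; last by exists i; rewrite ?ci.
by case: ifP => cj E; [rewrite (injx E) | have := xNy i j; rewrite E eqxx].
Qed.

Lemma mem_y_transversal i : (y i \in transversal) = ~~ c i.
Proof.
apply/imsetP/idP => [[j _] | /negbTE ci]; last by exists i; rewrite ?ci.
by case: ifP => cj E; [have := xNy j i; rewrite E eqxx | rewrite (injy E) cj].
Qed.

Lemma card_transversal : #|transversal| = q.
Proof.
rewrite card_imset ?card_ord // => i j.
case: (c i); case: (c j) => E; first exact: injx; last exact: injy.
- by have := xNy i j; rewrite E eqxx.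
- by have := xNy j i; rewrite E eqxx.
Qed.

End Transversal.

Theorem proposition2 (V : finType) (G : rel V)
  (HG : simple_graph G) (Hiso : no_isolated G)
  (F : {set {ffun V -> bool}}) (HF : sub_phi G F)
  (Z : bp V) (HZ : is_NROBP Z) (HZF : represents Z F)
  (u : bp_node Z) (q : nat) (x y : 'I_q -> V)
  (HM : is_matching G x y)
  (Hsep : separated [set x i | i : 'I_q] [set y i | i : 'I_q] u) :
  exists X : {set V},
    #|X| = q /\
    (forall i, (x i \in X) (+) (y i \in X)) /\
    (forall p1 p2, split_at u p1 p2 -> forall v, v \in X -> (v, true) \in A (p1 ++ p2)).
Proof.
case: HM => [Gxy [injx [injy xNy]]].
have edge_forced i : exists c : bool, forced_true u (if c then x i else y i).
  have Fxy f : f \in F -> f (x i) || f (y i) by move/HF/sat_phi_edge; apply.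
  have Fyx f : f \in F -> f (y i) || f (x i) by rewrite orbC; apply: Fxy.
  have xi : x i \in [set x i | i : 'I_q] by apply: imset_f.
  have yi : y i \in [set y i | i : 'I_q] by apply: imset_f.
  case: Hsep => -[Hx Hy].
  - by have [] := clause_forced_true HZ HZF Fxy (Hx _ xi) (Hy _ yi); [exists true | exists false].
  - by have [] := clause_forced_true HZ HZF Fyx (Hy _ yi) (Hx _ xi); [exists false | exists true].
have [c Hc] := fin_all_exists edge_forced.
exists (transversal x y c); split; first exact: card_transversal.
split=> [i | p1 p2 S _ /imsetP[i _ ->]]; last exact: Hc.
by rewrite mem_x_transversal // mem_y_transversal // addbN addbb.
Qed.
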